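(* Let $k\ge 1$ and $\ell$ be integers with $0\le \ell\le k$. Let $G$ be a multigraph (loops allowed) with $n$ vertices and $kn-\ell$ edges. The following statements are equivalent: (1) $G$ is the union of $\ell$ edge-disjoint spanning trees and $k-\ell$ edge-disjoint maps; (2) adding any $\ell$ edges to $G$ results in a $k$-map.
   Context: Graphs are multigraphs, possibly with loops. A map is a graph admitting an orientation of its edges such that every vertex has out-degree exactly $1$ (a loop contributes out-degree $1$ to its vertex); maps here are spanning, i.e. on the full vertex set of $G$. A $k$-map is a graph whose edge set can be partitioned into $k$ edge-disjoint maps on the same vertex set. *)

From mathcomp Require Import all_boot.
Set Implicit Arguments. Unset Strict Implicit. Unset Printing Implicit Defensive.

(* A multigraph (loops allowed) on vertex finType V is given by a finType E of
   edges and an endpoint function ends : E -> V * V (a loop has equal ends).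
   A subgraph on the full vertex set is given by a set of edges S. *)
Section Graphs.
Variables (V E : finType) (ends : E -> V * V).

Definition joins (e : E) (u v : V) : bool :=
  (ends e == (u, v)) || (ends e == (v, u)).

(* S (on the full vertex set V) is a map: there is an orientation of its edges
   (a choice of tail among the two endpoints) giving every vertex out-degree 1. *)
Definition is_map (S : {set E}) : Prop :=
  exists tail : E -> V,
    (forall e, e \in S -> (tail e == (ends e).1) || (tail e == (ends e).2)) /\
    (forall v : V, #|[set e in S | tail e == v]| = 1).

Definition is_kmap (k : nat) : Prop :=
  exists f : E -> 'I_k, forall i : 'I_k, is_map [set e | f e == i].

Definition adj (S : {set E}) : rel V :=
  fun u v => [exists e in S, joins e u v].

Definition connected_spanning (S : {set E}) : Prop :=
  forall u v : V, connect (adj S) u v.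

(* a cycle in S: distinct edges s_0..s_{m-1} (m >= 1) and distinct vertices
   vs_0..vs_{m-1} with s_i joining vs_i and vs_{i+1 mod m}
   (m = 1: a loop; m = 2: two parallel edges). *)
Definition has_cycle (S : {set E}) : Prop :=
  exists (s : seq E) (vs : seq V) (e0 : E) (v0 : V),
    [/\ 0 < size s, size vs = size s, uniq s && uniq vs,
        all (fun e => e \in S) s &
        forall i, i < size s ->
          joins (nth e0 s i) (nth v0 vs i) (nth v0 vs ((i.+1) %% size s))].

Definition is_spanning_tree (S : {set E}) : Prop :=
  connected_spanning S /\ ~ has_cycle S.

Definition trees_and_maps (k l : nat) : Prop :=
  exists f : E -> 'I_k, forall i : 'I_k,
    if i < l then is_spanning_tree [set e | f e == i]
    else is_map [set e | f e == i].

End Graphs.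

Definition add_edges (V E : finType) (ends : E -> V * V) (l : nat)
  (add : 'I_l -> V * V) : E + 'I_l -> V * V :=
  fun x => match x with inl e => ends e | inr j => add j end.

From mathcomp Require Import all_boot zify.
Set Implicit Arguments. Unset Strict Implicit. Unset Printing Implicit Defensive.

(* (1) => (2): a connected spanning subgraph has at least |V| - 1 edges and a map
   exactly |V|, so the edge count forces each of the l trees to have exactly
   |V| - 1 edges.  Such a tree can be oriented towards any root so that every
   other vertex has out-degree one; orienting the j-th added edge out of the
   root chosen as its endpoint turns the j-th tree into a map.

   (2) => (1): adding l loops at a vertex r yields an orientation of G with
   out-degree k everywhere except at r, where it is k - l.  Adding the loops at a
   vertex of X instead shows, by counting the arcs with both ends in X, that at
   least l arcs leave every nonempty X avoiding r.  Edmonds' branching theorem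
   then gives l arc-disjoint spanning arborescences directed towards r; it is
   proved by Lovasz's argument, growing one arborescence arc by arc, each time
   adding an entering arc whose removal still leaves l - 1 arcs out of every
   such X (an arc inside a minimal tight set works, by submodularity of the
   out-degree).  Outside the arborescences every vertex
   keeps exactly k - l out-arcs, which are dealt out into k - l maps. *)

Lemma card_set_sum1 (T : finType) (P : pred T) : #|[set x | P x]| = \sum_x (P x : nat).
Proof. by rewrite -sum1dep_card big_mkcond /=; apply: eq_bigr => x _; case: (P x). Qed.

Lemma card_set_sumType (A B : finType) (P : pred (A + B)) :
  #|[set x | P x]| = #|[set a | P (inl a)]| + #|[set b | P (inr b)]|.
Proof. by rewrite !card_set_sum1 big_sumType. Qed.

Lemma card_set_partition (T W : finType) (g : T -> W) (P : pred T) :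
  #|[set x | P x]| = \sum_(w : W) #|[set x | P x && (g x == w)]|.
Proof.
rewrite card_set_sum1 (partition_big g predT) //=; apply: eq_bigr => w _.
rewrite card_set_sum1 big_mkcond /=; apply: eq_bigr => x _.
by case: (g x == w); rewrite ?andbT ?andbF.
Qed.

Lemma card_set_ltn_partition (T : finType) (P : pred T) (c : T -> nat) (l : nat) :
  #|[set x | P x && (c x < l)]| = \sum_(i < l) #|[set x | P x && (c x == i)]|.
Proof.
have sum_eq_ltn (n : nat) : \sum_(i < l) (n == i :> nat : nat) = (n < l).
  elim: l => [|l IHl]; first by rewrite big_ord0.
  by rewrite big_ord_recr /= IHl; case: ltngtP; lia.
rewrite card_set_sum1 (eq_bigr (fun i : 'I_l => \sum_x (P x && (c x == i) : nat))); last first.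
  by move=> i _; rewrite card_set_sum1.
rewrite exchange_big; apply: eq_bigr => x _ /=.
by case: (P x) => /=; [rewrite sum_eq_ltn | rewrite big1].
Qed.

Lemma card_preimset_const (T W : finType) (t : T -> W) (m : nat) (X : {set W}) :
  (forall v, v \in X -> #|[set x | t x == v]| = m) -> #|[set x | t x \in X]| = #|X| * m.
Proof.
move=> out_m; rewrite (card_set_partition t) (bigID (mem X)) /= [X in _ + X]big1 ?addn0.
  rewrite -sum_nat_const; apply: eq_bigr => v vX; rewrite -(out_m v vX); apply: eq_card => x.
  by rewrite !inE; case: eqP => [->|]; rewrite ?vX ?andbF.
move=> v vX; apply/eqP; rewrite cards_eq0; apply/eqP/setP => x; rewrite !inE.
by case: eqP => [->|]; rewrite ?(negbTE vX) ?andbF.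
Qed.

Lemma sum_leq_eq (I : finType) (x y : I -> nat) :
  (forall i, y i <= x i) -> \sum_i x i <= \sum_i y i -> forall i, x i = y i.
Proof.
move=> le_yx le_sum i.
have [_ eq_sum] := @leqif_sum I predT _ _ _ (fun j _ => leqif_eq (le_yx j)).
have /forall_inP/(_ i isT)/eqP -> // : [forall (j | predT j), y j == x j].
by rewrite -eq_sum eqn_leq le_sum andbT; apply: leq_sum.
Qed.

Lemma adj_sym (V E : finType) (ends : E -> V * V) (S : {set E}) : symmetric (adj ends S).
Proof. by move=> u v; apply/existsP/existsP => -[e He]; exists e; rewrite /joins orbC. Qed.

Lemma joins_end1 (V E : finType) (ends : E -> V * V) e v w :
  joins ends e v w -> (v == (ends e).1) || (v == (ends e).2).
Proof. by rewrite /joins; case: (ends e) => p q /orP [] /eqP [-> ->]; rewrite eqxx ?orbT. Qed.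

Lemma joins_flip (V E : finType) (ends : E -> V * V) e v w v' w' :
  joins ends e v w -> joins ends e v' w' -> v != v' -> v' = w /\ v = w'.
Proof.
rewrite /joins; case: (ends e) => p q.
by case/orP => /eqP [-> ->] /orP [] /eqP [-> ->]; rewrite ?eqxx.
Qed.

Section Orientation.
Variables (V E : finType) (ends : E -> V * V) (tl : E -> V).
Hypothesis tl_end : forall e, (tl e == (ends e).1) || (tl e == (ends e).2).

Definition hd e := if tl e == (ends e).1 then (ends e).2 else (ends e).1.

Lemma tl_hd e :
  (tl e = (ends e).1 /\ hd e = (ends e).2) \/ (tl e = (ends e).2 /\ hd e = (ends e).1).
Proof.
rewrite /hd; case: eqP => [-> | ne1]; [left | right]; split => //.
by move: (tl_end e) => /orP [/eqP|/eqP].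
Qed.

Lemma joins_tl_hd e : joins ends e (tl e) (hd e).
Proof.
by rewrite /joins; case: (tl_hd e) => -[-> ->]; rewrite -?surjective_pairing eqxx ?orbT.
Qed.

Lemma joins_tl_hdE e x y : joins ends e x y ->
  ((tl e == x) || (tl e == y)) && ((hd e == x) || (hd e == y)).
Proof.
rewrite /joins; case: (tl_hd e) => -[]; case: (ends e) => p q /= -> -> /orP [] /eqP [-> ->];
  by rewrite !eqxx ?orbT.
Qed.

Definition leaves (X : {set V}) e := (tl e \in X) && (hd e \notin X).

Definition outdeg (D : {set E}) (X : {set V}) := \sum_(e in D) (leaves X e : nat).

Lemma outdeg_setIU (D : {set E}) (X Y : {set V}) :
  outdeg D (X :&: Y) + outdeg D (X :|: Y) <= outdeg D X + outdeg D Y.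
Proof.
rewrite /outdeg -!big_split /=; apply: leq_sum => e _; rewrite /leaves !inE.
by case: (tl e \in X); case: (tl e \in Y); case: (hd e \in X); case: (hd e \in Y).
Qed.

Lemma outdeg_setD1 (D : {set E}) (X : {set V}) e :
  e \in D -> outdeg D X = leaves X e + outdeg (D :\ e) X.
Proof.
move=> eD; rewrite /outdeg (bigD1 e eD) /=; congr (_ + _).
by apply: eq_bigl => c; rewrite !inE andbC.
Qed.

Variable r : V.

(* An in-arborescence on R rooted at r; the height h, decreasing along arcs,
   certifies acyclicity. *)
Definition arborescence (R : {set V}) (A : {set E}) :=
  [/\ forall v, v \in R -> v != r -> #|[set e in A | tl e == v]| = 1,
      forall e, e \in A -> [&& tl e \in R, tl e != r & hd e \in R] &
      exists h : V -> nat, forall e, e \in A -> h (hd e) < h (tl e)].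

Lemma arborescence_tl_in (R : {set V}) (A : {set E}) e :
  arborescence R A -> e \in A -> tl e \in R.
Proof. by case=> _ /(_ e) tlA _ /tlA /and3P []. Qed.

Lemma arborescence_extend (R : {set V}) (A : {set E}) a :
  r \in R -> arborescence R A -> tl a \notin R -> hd a \in R ->
  arborescence (tl a |: R) (a |: A).
Proof.
move=> rR arbA taR haR; have [out1 tlA [h h_desc]] := arbA.
have aA : a \notin A by apply: contra taR; apply: arborescence_tl_in.
have ne_ta v : v \in R -> (v == tl a) = false.
  by move=> vR; apply/negbTE; apply: contraNneq taR => <-.
split.
- move=> v; rewrite !inE => /orP [/eqP -> _ | vR vr].
    rewrite -(cards1 a); apply: eq_card => e; rewrite !inE.
    have [-> | ea] //= := eqVneq e a; first by rewrite eqxx.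
    by case: (boolP (e \in A)) => //= /(arborescence_tl_in arbA) /ne_ta ->.
  rewrite -(out1 v vR vr); apply: eq_card => e; rewrite !inE.
  by have [-> | ea] //= := eqVneq e a; rewrite (negbTE aA) eq_sym ne_ta.
- move=> e; rewrite !inE => /orP [/eqP -> | eA].
    by rewrite eqxx haR orbT andbT; apply: contraNneq taR => ->.
  by case/and3P: (tlA e eA) => -> -> ->; rewrite !orbT.
- exists (fun v => if v == tl a then (h (hd a)).+1 else h v) => e; rewrite !inE.
  case/orP => [/eqP -> | eA]; first by rewrite ne_ta // eqxx.
  by case/and3P: (tlA e eA) => tlR _ hdR; rewrite !ne_ta //; apply: h_desc.
Qed.

Section Spanning.
Variable A : {set E}.
Hypothesis arbA : arborescence setT A.

Lemma arborescence_connect v : connect (adj ends A) v r.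
Proof.
case: arbA => out1 /(_ _ _)/and3P tlA [h h_desc].
elim: {v}(h v).+1 {-2}v (ltnSn (h v)) => [//|n IHn] v hv.
have [-> | vr] := eqVneq v r; first exact: connect0.
have: 0 < #|[set e in A | tl e == v]| by rewrite out1 ?inE.
case/card_gt0P => e; rewrite inE => /andP [eA /eqP tle].
apply: (@connect_trans _ _ (hd e)).
  by apply: connect1; apply/existsP; exists e; rewrite eA -tle joins_tl_hd.
by apply: IHn; move: (h_desc e eA); rewrite tle; lia.
Qed.

Lemma arborescence_acyclic : ~ has_cycle ends A.
Proof.
case: arbA => out1 /(_ _ _)/and3P tlA [h h_desc].
case=> s [vs [e0 [v0 [s_gt0 size_vs /andP [uniq_s uniq_vs] /allP sA s_joins]]]].
have ends_vs e : e \in s -> (tl e \in vs) && (hd e \in vs).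
  case/(nthP e0) => i lt_i <-; have := joins_tl_hdE (s_joins i lt_i).
  have vs_i: nth v0 vs i \in vs by rewrite mem_nth ?size_vs.
  have vs_i1: nth v0 vs (i.+1 %% size s) \in vs by rewrite mem_nth ?size_vs ?ltn_pmod.
  by case/andP => /orP [] /eqP -> /orP [] /eqP ->; rewrite ?vs_i ?vs_i1.
have tl_inj : {in s &, injective tl}.
  move=> e f es fs tl_ef; have [eA fA] := (sA e es, sA f fs).
  have [_ tl_r _] := tlA e eA.
  have /eqP := out1 _ (in_setT (tl e)) tl_r; rewrite eqn_leq => /andP [/card_le1_eqP le1 _].
  by apply: le1; rewrite inE ?eA ?fA -?tl_ef eqxx.
(* the tails of the cycle's edges are all its vertices, so some tail has minimal height *)
have tl_s_vs : {subset map tl s <= vs}.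
  by move=> x /mapP [e es ->]; case/andP: (ends_vs e es).
have uniq_tl : uniq (map tl s) by rewrite map_inj_in_uniq.
have le_size : size vs <= size (map tl s) by rewrite size_map size_vs.
have [_ tl_vs] := uniq_min_size uniq_tl tl_s_vs le_size.
have vs0 : nth v0 vs 0 \in vs by rewrite mem_nth ?size_vs.
case: (@arg_minnP V (nth v0 vs 0) (mem vs) h vs0) => u uvs h_min.
have /mapP [e es tle] : u \in map tl s by rewrite tl_vs.
rewrite tle in h_min.
have := h_desc e (sA e es); have := h_min _ (proj2 (andP (ends_vs e es))); lia.
Qed.

Lemma arborescence_spanning_tree : is_spanning_tree ends A.
Proof.
split; last exact: arborescence_acyclic.
move=> u v; apply: (connect_trans (arborescence_connect u)).
by rewrite (sym_connect_sym (@adj_sym _ _ ends A)) arborescence_connect.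
Qed.

Lemma card_arborescence_out v : #|[set e in A | tl e == v]| = (v != r).
Proof.
case: arbA => out1 /(_ _ _)/and3P tlA _; have [-> | vr] := eqVneq v r; last by rewrite out1.
apply/eqP; rewrite cards_eq0; apply/eqP/setP => e; rewrite !inE.
by apply/negbTE/negP => /andP [/tlA [_ tl_r _] tle]; rewrite tle in tl_r.
Qed.

End Spanning.
End Orientation.

Section Growth.
Variables (V E : finType) (ends : E -> V * V) (tl : E -> V) (r : V).
Variables (Avail : {set E}) (ell : nat).
Hypothesis outdeg_Avail :
  forall X : {set V}, r \notin X -> X != set0 -> ell < outdeg ends tl Avail X.

Local Notation hd := (hd ends tl).
Local Notation leaves := (leaves ends tl).
Local Notation outdeg := (outdeg ends tl).
Local Notation arborescence := (arborescence ends tl r).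

Definition residual_cut (A : {set E}) :=
  forall X : {set V}, r \notin X -> X != set0 -> ell <= outdeg (Avail :\: A) X.

Definition partial_branching (R : {set V}) (A : {set E}) :=
  [/\ r \in R, A \subset Avail, arborescence R A & residual_cut A].

Definition safe_arc (R : {set V}) (A : {set E}) (a : E) :=
  [/\ a \in Avail :\: A, tl a \notin R, hd a \in R &
      forall X : {set V}, r \notin X -> X != set0 -> leaves X a ->
        ell < outdeg (Avail :\: A) X].

Definition tight_set (R : {set V}) (A : {set E}) (Z : {set V}) :=
  [&& r \notin Z, Z :\: R != set0 & outdeg (Avail :\: A) Z <= ell].

Section Step.
Variables (R : {set V}) (A : {set E}).
Hypothesis partialRA : partial_branching R A.

Lemma partial_tl_in e : e \in A -> tl e \in R.
Proof. by case: partialRA => _ _ arbA _; apply: (arborescence_tl_in arbA). Qed.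

Lemma safe_arc_min_tight Z : tight_set R A Z ->
  (forall Y, tight_set R A Y -> #|Z| <= #|Y|) -> exists a, safe_arc R A a.
Proof.
case/and3P=> rZ ZR outZ Zmin; have [_ _ _ cutA] := partialRA.
have /existsP [b /andP [bD /andP [/setDP [tbZ tbR] /setIP [hbZ hbR]]]] :
    [exists b in Avail :\: A, (tl b \in Z :\: R) && (hd b \in Z :&: R)].
  (* otherwise every available arc leaving Z :\: R leaves Z, and none lies in A *)
  apply: contraT => /existsPn no_b.
  have rZR : r \notin Z :\: R by rewrite inE negb_and rZ orbT.
  suff : outdeg Avail (Z :\: R) <= outdeg (Avail :\: A) Z by have := outdeg_Avail rZR ZR; lia.
  rewrite /outdeg (big_setID A) /= big1 => [|e /setIP [_ eA]]; last first.
    by rewrite /leaves !inE (partial_tl_in eA).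
  rewrite add0n; apply: leq_sum => e eD; move: (no_b e); rewrite eD /= /leaves !inE.
  by case: (tl e \in Z); case: (tl e \in R); case: (hd e \in Z); case: (hd e \in R).
exists b; split=> // X rX X0 /andP [tbX hbX]; rewrite ltnNge; apply/negP => outX.
have rXZ : r \notin X :|: Z by rewrite inE negb_or rX rZ.
have XZ0 : X :|: Z != set0 by apply/set0Pn; exists (tl b); rewrite inE tbX.
have tightXZ : tight_set R A (X :&: Z).
  rewrite /tight_set inE negb_and rX /=; apply/andP; split.
    by apply/set0Pn; exists (tl b); rewrite !inE tbR tbX tbZ.
  have := cutA _ rXZ XZ0; have := outdeg_setIU ends tl (Avail :\: A) X Z; lia.
have /eqP/setP/(_ (hd b)) : X :&: Z == Z by rewrite eqEcard subsetIr Zmin.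
by rewrite !inE hbZ (negbTE hbX).
Qed.

Lemma safe_arc_no_tight : R != setT -> (forall Z, ~~ tight_set R A Z) ->
  exists a, safe_arc R A a.
Proof.
move=> RT no_tight; have [rR _ _ _] := partialRA.
have notR0 : ~: R != set0 by rewrite -setCT (inj_eq (@setC_inj _)).
have rnotR : r \notin ~: R by rewrite inE rR.
have /(leq_ltn_trans (leq0n _)) := outdeg_Avail rnotR notR0.
rewrite lt0n sum_nat_eq0 negb_forall => /existsP [b].
rewrite negb_imply eqb0 negbK /leaves !inE negbK => /andP [bAv /andP [tbR hbR]].
have bA : b \notin A by apply: contra tbR => /partial_tl_in.
exists b; split=> //; first by rewrite inE bA.
move=> X rX X0 /andP [tbX _]; move: (no_tight X).
rewrite /tight_set rX /= negb_and -ltnNge => /orP [/negbNE /eqP /setP /(_ (tl b)) | //].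
by rewrite !inE tbR tbX.
Qed.

Lemma exists_safe_arc : R != setT -> exists a, safe_arc R A a.
Proof.
move=> RT; case: (pickP (tight_set R A)) => [Z0 tightZ0 | no_tight]; last first.
  by apply: safe_arc_no_tight => // Z; rewrite no_tight.
have [Z tightZ Zmin] := @arg_minnP _ Z0 (tight_set R A) (fun Z => #|Z|) tightZ0.
exact: safe_arc_min_tight tightZ Zmin.
Qed.

Lemma partial_branching_extend a : safe_arc R A a -> partial_branching (tl a |: R) (a |: A).
Proof.
case=> aD taR haR safe_a; have [rR AAv arbA cutA] := partialRA.
split; [by rewrite !inE rR orbT | | exact: (arborescence_extend rR arbA taR haR) | ].
  by rewrite subUset sub1set AAv andbT; case/setDP: aD.
have setD1_aA : (Avail :\: A) :\ a = Avail :\: (a |: A).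
  by apply/setP => e; rewrite !inE negb_or andbA.
move=> X rX X0; have := cutA X rX X0; rewrite (outdeg_setD1 ends tl X aD) setD1_aA.
case: (boolP (leaves X a)) => [leaves_a | _] // _.
by have := safe_a X rX X0 leaves_a; rewrite (outdeg_setD1 ends tl X aD) setD1_aA leaves_a.
Qed.

End Step.

Lemma exists_spanning_partial_branching : exists A, partial_branching setT A.
Proof.
have partial0 : partial_branching [set r] set0.
  split; rewrite ?inE ?sub0set //.
  - split=> [v /set1P -> | e | ]; rewrite ?eqxx ?in_set0 //.
    by exists (fun=> 0) => e; rewrite in_set0.
  - by move=> X rX X0; rewrite setD0 ltnW ?outdeg_Avail.
suff grow n R A : #|~: R| <= n -> partial_branching R A -> exists A, partial_branching setT A.
  exact: grow partial0.
elim: n R A => [|n IHn] R A cardRc partialRA.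
  move: cardRc; rewrite leqn0 cards_eq0 -setCT (inj_eq (@setC_inj _)) => /eqP RT.
  by exists A; rewrite -RT.
have [RT | RnT] := eqVneq R setT; first by exists A; rewrite -RT.
have [a safe_a] := exists_safe_arc partialRA RnT.
apply: IHn (partial_branching_extend partialRA safe_a).
case: safe_a => _ taR _ _.
have -> : ~: (tl a |: R) = ~: R :\ tl a by apply/setP => v; rewrite !inE negb_or andbC.
by move: cardRc; rewrite (cardsD1 (tl a)) inE taR.
Qed.

End Growth.

Lemma edmonds_branching (V E : finType) (ends : E -> V * V) (tl : E -> V) (r : V)
    (ell : nat) (Avail : {set E}) :
  (forall X : {set V}, r \notin X -> X != set0 -> ell <= outdeg ends tl Avail X) ->
  exists c : E -> nat,
    forall i, i < ell -> arborescence ends tl r setT [set e in Avail | c e == i].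
Proof.
elim: ell Avail => [|ell IHell] Avail cut_Avail; first by exists (fun=> 0).
have [A [_ AAv arbA cutA]] := exists_spanning_partial_branching cut_Avail.
have [c c_arb] := IHell _ cutA.
exists (fun e => if e \in A then 0 else (c e).+1) => -[|i] lt_i.
  suff -> : [set e in Avail | (if e \in A then 0 else (c e).+1) == 0] = A by [].
  apply/setP => e; rewrite !inE; case: (boolP (e \in A)) => [eA | _]; last by rewrite andbF.
  by rewrite (subsetP AAv e eA).
suff -> : [set e in Avail | (if e \in A then 0 else (c e).+1) == i.+1] =
          [set e in Avail :\: A | c e == i] by exact: c_arb.
by apply/setP => e; rewrite !inE; case: (e \in A); rewrite ?andbF.
Qed.

Section ConnectedSpanning.
Variables (V E : finType) (ends : E -> V * V) (S : {set E}) (a : V).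
Hypothesis connS : connected_spanning ends S.

Lemma connected_descent : exists d : V -> nat, forall v, v != a ->
  [exists e in S, exists w, joins ends e v w && (d w < d v)].
Proof.
pose path_to v n := [exists p : n.-tuple V, path (adj ends S) v p && (last v p == a)].
have ex_path v : exists n, path_to v n.
  have /connectP [p p_path p_last] := connS v a.
  by exists (size p); apply/existsP; exists (in_tuple p); rewrite p_path -p_last eqxx.
exists (fun v => ex_minn (ex_path v)) => v va.
case: (ex_minnP (ex_path v)) => n /existsP [[p size_p] /= /andP [p_path p_last]] _.
move: p size_p p_path p_last => [|w p] /eqP size_p /=.
  by move=> _ /eqP vE; rewrite vE eqxx in va.
case/andP => /existsP [e /andP [eS e_vw]] p_path p_last.
apply/existsP; exists e; rewrite eS; apply/existsP; exists w; rewrite e_vw /=.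
case: (ex_minnP (ex_path w)) => m _ m_min.
have : path_to w (size p) by apply/existsP; exists (in_tuple p); rewrite p_path.
by move/m_min; rewrite -size_p.
Qed.

(* An edge descends from at most one of its ends, the one farther from a; sending
   each edge to that end covers every vertex other than a. *)
Lemma connected_orientation : exists t : E -> V,
  (forall e, e \in S -> (t e == (ends e).1) || (t e == (ends e).2)) /\
  [set~ a] \subset t @: S.
Proof.
have [d descent] := connected_descent.
pose desc e v := [exists w, joins ends e v w && (d w < d v)].
have desc_uniq e v v' : desc e v -> desc e v' -> v = v'.
  move=> /existsP [w /andP [e_vw dw]] /existsP [w' /andP [e_vw' dw']].
  apply/eqP; apply: contraT => vv'; have [v'E vE] := joins_flip e_vw e_vw' vv'.
  by move: dw dw'; rewrite v'E vE; lia.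
exists (fun e => odflt (ends e).1 [pick v | desc e v]); split.
  move=> e _; case: pickP => [v /existsP [w /andP [e_vw _]] | _] /=; last by rewrite eqxx.
  exact: joins_end1 e_vw.
apply/subsetP => v; rewrite in_setC1 => /descent /exists_inP [e eS desc_v].
apply/imsetP; exists e => //; case: pickP => [v' desc_v' | no_desc] /=.
  exact: desc_uniq desc_v desc_v'.
by move: (no_desc v); rewrite /desc desc_v.
Qed.

Lemma connected_card_edges : #|V| <= #|S|.+1.
Proof.
have [t [_ cover]] := connected_orientation.
have := leq_trans (subset_leq_card cover) (leq_imset_card t S).
by rewrite cardsC1; lia.
Qed.

Lemma connected_tight_orientation : #|S|.+1 <= #|V| -> exists t : E -> V,
  (forall e, e \in S -> (t e == (ends e).1) || (t e == (ends e).2)) /\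
  forall u, #|[set e in S | t e == u]| = (u != a).
Proof.
move=> tight; have [t [t_end cover]] := connected_orientation.
have card_tS : #|t @: S| <= #|[set~ a]| by rewrite cardsC1; have := leq_imset_card t S; lia.
have tS : t @: S = [set~ a] by apply/eqP; rewrite eq_sym eqEcard cover.
have /imset_injP t_inj : #|t @: S| == #|S|.
  by rewrite eqn_leq leq_imset_card; move: (subset_leq_card cover); rewrite cardsC1; lia.
exists t; split=> // u; have [-> | ua] := eqVneq u a.
  apply/eqP; rewrite cards_eq0; apply/eqP/setP => e; rewrite !inE.
  apply/negbTE/andP => -[eS /eqP tea]; move: (imset_f t eS); rewrite tS tea.
  by rewrite !inE eqxx.
have /imsetP [e0 e0S ->] : u \in t @: S by rewrite tS in_setC1.
rewrite /= -(cards1 e0); apply: eq_card => e; rewrite !inE.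
by apply/andP/eqP => [[eS /eqP]|->]; [exact: t_inj | rewrite e0S].
Qed.

End ConnectedSpanning.

Lemma kmap_orientation (V F : finType) (ends : F -> V * V) (k : nat) : is_kmap ends k ->
  exists t : F -> V, (forall x, (t x == (ends x).1) || (t x == (ends x).2)) /\
                     forall v, #|[set x | t x == v]| = k.
Proof.
case=> f f_map; have [t t_map] := fin_all_exists f_map.
exists (fun x => t (f x) x); split=> [x | v].
  by case: (t_map (f x)) => t_end _; apply: t_end; rewrite inE.
rewrite (card_set_partition f) (eq_bigr (fun=> 1)) ?sum_nat_const ?card_ord ?muln1 // => i _.
case: (t_map i) => _ /(_ v) <-; apply: eq_card => x; rewrite !inE andbC.
by case: (eqVneq (f x) i) => [-> | ].
Qed.

Lemma card_map (V E : finType) (ends : E -> V * V) (S : {set E}) :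
  is_map ends S -> #|S| = #|V|.
Proof.
case=> t [_ out1]; have -> : #|S| = #|[set e | e \in S]| by apply: eq_card => e; rewrite inE.
by rewrite (card_set_partition t) (eq_bigr (fun=> 1)) ?sum1_card.
Qed.

Lemma is_map_add_edges (V E : finType) (ends : E -> V * V) (l : nat) (add : 'I_l -> V * V)
    (C : pred (E + 'I_l)) (t : E -> V) :
  (forall e, C (inl e) -> (t e == (ends e).1) || (t e == (ends e).2)) ->
  (forall u, #|[set e | C (inl e) && (t e == u)]| +
             #|[set j | C (inr j) && ((add j).1 == u)]| = 1) ->
  is_map (add_edges ends add) [set x | C x].
Proof.
move=> t_end out1; pose t' x := match x with inl e => t e | inr j => (add j).1 end.
exists t'; split=> [[e|j] | u]; rewrite ?inE /=; [exact: t_end | by rewrite eqxx | ].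
rewrite -(out1 u) -(card_set_sumType (fun x => C x && (t' x == u))).
by apply: eq_card => x; rewrite !inE.
Qed.

Lemma split_out_regular (V E : finType) (tl : E -> V) (P : pred E) (m : nat) :
  (forall v, #|[set e | P e && (tl e == v)]| = m) ->
  exists g : E -> nat, (forall e, P e -> g e < m) /\
    forall i v, i < m -> #|[set e | [&& P e, g e == i & tl e == v]]| = 1.
Proof.
move=> out_m; pose out v := enum [set e | P e && (tl e == v)].
have size_out v : size (out v) = m by rewrite -cardE out_m.
have in_out e v : (e \in out v) = P e && (tl e == v) by rewrite mem_enum inE.
exists (fun e => index e (out (tl e))); split=> [e Pe | i v lt_im].
  by rewrite -(size_out (tl e)) index_mem in_out Pe eqxx.
have lt_i : i < size (out v) by rewrite size_out.
have [e0 _] : exists e0 : E, true by case: (out v) lt_i => // e0; exists e0.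
have /[dup] nth_out : nth e0 (out v) i \in out v by rewrite mem_nth.
rewrite in_out => /andP [P_nth /eqP tl_nth].
rewrite -(cards1 (nth e0 (out v) i)); apply: eq_card => e; rewrite !inE.
apply/idP/eqP => [/and3P [Pe /eqP <- /eqP tle] | ->].
  by rewrite tle nth_index // in_out Pe tle eqxx.
by rewrite P_nth tl_nth index_uniq ?enum_uniq ?eqxx.
Qed.

Section AddEdges.
Variables (V E : finType) (ends : E -> V * V) (l : nat) (add : 'I_l -> V * V).
Variables (C : pred (E + 'I_l)) (S : {set E}).
Hypothesis C_inl : forall e, C (inl e) = (e \in S).

Lemma tree_add_edge_map (j0 : 'I_l) : connected_spanning ends S -> #|S|.+1 <= #|V| ->
  (forall j, C (inr j) = (j == j0)) -> is_map (add_edges ends add) [set x | C x].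
Proof.
move=> connS tight C_inr; pose a := (add j0).1.
have [t [t_end t_out]] := connected_tight_orientation a connS tight.
apply: (is_map_add_edges (t := t)) => [e | u]; first by rewrite C_inl; apply: t_end.
have -> : #|[set e | C (inl e) && (t e == u)]| = (u != a).
  by rewrite -(t_out u); apply: eq_card => e; rewrite !inE C_inl.
suff -> : #|[set j | C (inr j) && ((add j).1 == u)]| = (a == u).
  by rewrite eq_sym; case: eqP.
have [<- | au] := eqVneq a u.
  rewrite /= -(cards1 j0); apply: eq_card => j; rewrite !inE C_inr.
  by case: eqVneq => [-> | ]; rewrite ?eqxx.
apply/eqP; rewrite cards_eq0; apply/eqP/setP => j; rewrite !inE C_inr.
by case: eqVneq => [-> | ] //=; apply: negbTE.
Qed.

Lemma map_add_no_edge_map : is_map ends S -> (forall j, ~~ C (inr j)) ->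
  is_map (add_edges ends add) [set x | C x].
Proof.
case=> t [t_end t_out] C_inr.
apply: (is_map_add_edges (t := t)) => [e | u]; first by rewrite C_inl; apply: t_end.
have -> : #|[set j | C (inr j) && ((add j).1 == u)]| = 0.
  by apply/eqP; rewrite cards_eq0; apply/eqP/setP => j; rewrite !inE (negbTE (C_inr j)).
by rewrite addn0 -(t_out u); apply: eq_card => e; rewrite !inE C_inl.
Qed.

End AddEdges.

Lemma trees_and_maps_add_kmap (k l : nat) (V E : finType) (ends : E -> V * V) :
  l <= k -> #|E| + l = k * #|V| -> trees_and_maps ends k l ->
  forall add : 'I_l -> V * V, is_kmap (add_edges ends add) k.
Proof.
move=> le_lk card_E [f f_class] add.
pose class (i : 'I_k) := [set e | f e == i].
have class_lb (i : 'I_k) : #|V| <= #|class i| + (i < l).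
  have := f_class i; case: ifP => lt_il /=.
    by case=> connS _; rewrite addn1 (connected_card_edges (add (Ordinal lt_il)).1 connS).
  by move=> /card_map ->; rewrite addn0.
(* the edge count leaves no slack: every tree has exactly |V| - 1 edges *)
have card_class (i : 'I_k) : #|class i| + (i < l) = #|V|.
  apply: (@sum_leq_eq _ (fun i => #|class i| + (i < l)) (fun=> #|V|)) => //.
  have sum_lt : \sum_(i < k) (i < l : nat) = l.
    by rewrite -big_mkcond /= -(big_ord_widen _ (fun=> 1) le_lk) sum1_card card_ord.
  rewrite big_split /= sum_lt -(card_set_partition f predT) cardsT card_E.
  by rewrite sum_nat_const card_ord.
pose f' x := match x with inl e => f e | inr j => widen_ord le_lk j end.
have f'_inl e (i : 'I_k) : (f' (inl e) == i) = (e \in class i) by rewrite inE.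
exists f' => i; have [lt_il | le_li] := ltnP i l.
  have := f_class i; rewrite lt_il => -[connS _].
  apply: (@tree_add_edge_map _ _ _ _ add _ _ (f'_inl ^~ i) (Ordinal lt_il) connS).
    by have := card_class i; rewrite lt_il addn1 => ->.
  by move=> j; rewrite -!val_eqE.
have := f_class i; rewrite ltnNge le_li => map_i.
apply: (map_add_no_edge_map add (f'_inl ^~ i) map_i) => j /=.
by rewrite -val_eqE /= neq_ltn (leq_trans (ltn_ord j) le_li).
Qed.

Section AddedLoops.
Variables (V E : finType) (ends : E -> V * V) (k l : nat) (x : V).
Hypothesis kmap_loops : is_kmap (add_edges ends (fun _ : 'I_l => (x, x))) k.

Lemma kmap_add_loops_orientation : exists t : E -> V,
  (forall e, (t e == (ends e).1) || (t e == (ends e).2)) /\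
  forall v, #|[set e | t e == v]| + (if v == x then l else 0) = k.
Proof.
have [t [t_end t_out]] := kmap_orientation kmap_loops.
have t_loop j : t (inr j) = x by have := t_end (inr j); rewrite /= orbb => /eqP.
exists (fun e => t (inl e)); split=> [e | v]; first exact: t_end (inl e).
rewrite -(t_out v) card_set_sumType; congr (_ + _); have [-> | vx] := eqVneq v x.
  by rewrite -[LHS](card_ord l); apply: eq_card => j; rewrite !inE t_loop eqxx.
apply/esym/eqP; rewrite cards_eq0; apply/eqP/setP => j.
by rewrite !inE t_loop eq_sym; apply: negbTE.
Qed.

(* Every vertex of X sends k arcs, the l added loops among them, so at most
   k |X| - l arcs have both ends in X. *)
Lemma kmap_add_loops_cut (tl : E -> V) (X : {set V}) :
  (forall e, (tl e == (ends e).1) || (tl e == (ends e).2)) ->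
  (forall v, v \in X -> #|[set e | tl e == v]| = k) ->
  x \in X -> l <= outdeg ends tl setT X.
Proof.
move=> tl_end tl_out xX; have [t [t_end t_out]] := kmap_orientation kmap_loops.
have t_loop j : t (inr j) = x by have := t_end (inr j); rewrite /= orbb => /eqP.
pose inside := [set e | ((ends e).1 \in X) && ((ends e).2 \in X)].
have card_tX : #|[set y | t y \in X]| = #|X| * k by apply: card_preimset_const.
have card_tlX : #|[set e | tl e \in X]| = #|X| * k by apply: card_preimset_const.
have card_tX_split : #|[set y | t y \in X]| = #|[set e | t (inl e) \in X]| + l.
  rewrite card_set_sumType; congr (_ + _); rewrite -[RHS](card_ord l).
  by apply: eq_card => j; rewrite !inE t_loop xX.
have inside_tX : #|inside| <= #|[set e | t (inl e) \in X]|.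
  apply: subset_leq_card; apply/subsetP => e; rewrite !inE => /andP [e1X e2X].
  by case/orP: (t_end (inl e)) => /eqP ->.
have tlX_inside : #|[set e | tl e \in X]| <= #|inside| + outdeg ends tl setT X.
  rewrite /outdeg (eq_bigl predT) => [|e]; last by rewrite in_setT.
  rewrite !card_set_sum1 -big_split /=; apply: leq_sum => e _; rewrite /leaves.
  by case: (tl_hd tl_end e) => -[-> ->]; case: ((ends e).1 \in X); case: ((ends e).2 \in X).
lia.
Qed.

End AddedLoops.

Lemma card_branching_out (V E : finType) (ends : E -> V * V) (tl : E -> V) (r : V)
    (c : E -> nat) (l : nat) :
  (forall i, i < l -> arborescence ends tl r setT [set e in setT | c e == i]) ->
  forall v, #|[set e | (tl e == v) && (c e < l)]| = if v == r then 0 else l.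
Proof.
move=> c_arb v; rewrite card_set_ltn_partition.
rewrite (eq_bigr (fun=> (v != r : nat))) => [|i _]; last first.
  rewrite -(card_arborescence_out (c_arb i (ltn_ord i))); apply: eq_card => e.
  by rewrite !inE andbC.
by rewrite sum_nat_const card_ord; case: (v == r); rewrite ?muln1 ?muln0.
Qed.

Lemma branching_trees_and_maps (V E : finType) (ends : E -> V * V) (tl : E -> V) (r : V)
    (c : E -> nat) (k l : nat) :
  0 < k -> l <= k -> (forall e, (tl e == (ends e).1) || (tl e == (ends e).2)) ->
  (forall v, #|[set e | tl e == v]| + (if v == r then l else 0) = k) ->
  (forall i, i < l -> arborescence ends tl r setT [set e in setT | c e == i]) ->
  trees_and_maps ends k l.
Proof.
move=> k_gt0 le_lk tl_end tl_out c_arb.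
have rest_out v : #|[set e | (l <= c e) && (tl e == v)]| = k - l.
  have := tl_out v; have := card_branching_out c_arb v.
  have -> : #|[set e | tl e == v]| =
            #|[set e | (tl e == v) && (c e < l)]| + #|[set e | (l <= c e) && (tl e == v)]|.
    rewrite !card_set_sum1 -big_split /=; apply: eq_bigr => e _.
    by rewrite [l <= c e]leqNgt; case: (tl e == v); case: (c e < l).
  by case: (v == r); lia.
have [g [g_lt g_out]] := split_out_regular rest_out.
pose f e : 'I_k := insubd (Ordinal k_gt0) (if c e < l then c e else l + g e).
have val_f e : val (f e) = if c e < l then c e else l + g e.
  rewrite val_insubd; case: (ltnP (c e) l) => [lt_cl | le_lc].
    by rewrite (leq_trans lt_cl le_lk).
  by rewrite ifT //; have := g_lt e le_lc; lia.
exists f => i; case: ifP => lt_il.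
  suff -> : [set e | f e == i] = [set e in setT | c e == i].
    exact: (arborescence_spanning_tree tl_end (c_arb i lt_il)).
  apply/setP => e; rewrite !inE -val_eqE val_f; case: ltnP => // le_lc.
  by rewrite /=; do 2!case: eqP => //=; lia.
exists tl; split=> [e _ | v]; first exact: tl_end.
have le_li : l <= i by rewrite leqNgt lt_il.
rewrite -(g_out (i - l) v); last by have := ltn_ord i; lia.
apply: eq_card => e; rewrite !inE -val_eqE val_f; case: ltnP => [lt_cl | le_lc] /=.
  by have -> : (c e == i) = false by apply/eqP; lia.
by congr (_ && _); apply/eqP/eqP; lia.
Qed.

Lemma kmap_add_trees_and_maps (k l : nat) (V E : finType) (ends : E -> V * V) :
  0 < k -> l <= k -> #|E| + l = k * #|V| ->
  (forall add : 'I_l -> V * V, is_kmap (add_edges ends add) k) -> trees_and_maps ends k l.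
Proof.
move=> k_gt0 le_lk card_E kmap_add.
case: (pickP (@predT V)) => [r _ | V0]; last first.
  have card_V : #|V| = 0 by apply: eq_card0 => v; have := V0 v.
  have E0 : #|E| = 0 by move: card_E; rewrite card_V muln0; lia.
  have l0 : l = 0 by move: card_E; rewrite card_V muln0; lia.
  exists (fun=> Ordinal k_gt0) => i; rewrite l0 ltn0; exists (ffun0 E0).
  by split=> [e | v]; [have := card0_eq E0 e | have := V0 v].
have [tl [tl_end tl_out]] := kmap_add_loops_orientation (kmap_add (fun=> (r, r))).
have cut_outdeg (X : {set V}) : r \notin X -> X != set0 -> l <= outdeg ends tl setT X.
  move=> rX /set0Pn [x xX]; apply: (kmap_add_loops_cut (kmap_add (fun=> (x, x))) tl_end _ xX).
  move=> v vX; have vr : (v == r) = false by apply/negbTE; apply: contraNneq rX => <-.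
  by have := tl_out v; rewrite vr addn0.
have [c c_arb] := edmonds_branching cut_outdeg.
exact: branching_trees_and_maps k_gt0 le_lk tl_end tl_out c_arb.
Qed.

Theorem corollary1 (k l : nat) (V E : finType) (ends : E -> V * V) :
  1 <= k -> l <= k ->
  #|E| + l = k * #|V| ->
  (trees_and_maps ends k l <->
   forall add : 'I_l -> V * V, is_kmap (add_edges ends add) k).
Proof.
move=> k_gt0 le_lk card_E; split.
  exact: trees_and_maps_add_kmap.
exact: kmap_add_trees_and_maps.
Qed.
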